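(* Let $q>0$, $q\neq1$. For every integer $N\ge0$, the $q$-Hermite polynomial $H_N(x;q)$ satisfies, for all real $x\neq0$, $$2D_x^2H_N(x;q)-[2]_q^2\,x\frac{d}{dx}H_N(x;q)+[2]_q^2\,N\,H_N(x;q)=0 .$$
   Context: For $n\ge 0$ let $[n]_q=\frac{q^n-1}{q-1}$, $[0]_q!=1$, $[n]_q!=[1]_q\cdots[n]_q$, and $e_q(z)=\sum_{n\ge0}z^n/[n]_q!$. The $q$-derivative is $D_xf(x)=\frac{f(qx)-f(x)}{(q-1)x}$ and $D_x^2=D_x\circ D_x$. The $q$-Hermite polynomials $H_N(x;q)$ are defined by the identity of formal power series in $t$: $e^{-t^2}e_q([2]_q t x)=\sum_{N\ge0}H_N(x;q)\,t^N/[N]_q!$. *)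

From HB Require Import structures.
From mathcomp Require Import all_boot all_order all_algebra.
From mathcomp Require Import all_classical all_reals all_analysis.
Set Implicit Arguments. Unset Strict Implicit. Unset Printing Implicit Defensive.
Import Order.TTheory GRing.Theory Num.Theory.
Local Open Scope ring_scope.

Section QHermite.
Variable R : realType.

Definition qint (q : R) (n : nat) : R := (q ^+ n - 1) / (q - 1).

Definition qfact (q : R) (n : nat) : R := \prod_(i < n) qint q i.+1.

Definition qD (q : R) (f : R -> R) : R -> R :=
  fun x => (f (q * x) - f x) / ((q - 1) * x).

(* coefficient of t^i in the formal power series e^{-t^2} = sum_k (-1)^k t^(2k)/k! *)
Definition expm2_coef (i : nat) : R :=
  if odd i then 0 else (-1) ^+ i./2 / (i./2)`!%:R.

(* coefficient of t^j in e_q([2]_q t x) = sum_j ([2]_q x)^j t^j / [j]_q!, as a polynomial in x *)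
Definition eq_coef (q : R) (j : nat) : {poly R} :=
  (qint q 2 ^+ j / qfact q j) *: 'X^j.

(* H_N(x;q) = [N]_q! * (coefficient of t^N in e^{-t^2} e_q([2]_q t x)),
   the coefficient being the Cauchy product of the two series *)
Definition qHermite (q : R) (N : nat) : {poly R} :=
  qfact q N *: \sum_(i < N.+1) expm2_coef i *: eq_coef q (N - i).

End QHermite.

From HB Require Import structures.
From mathcomp Require Import all_boot all_order all_algebra.
From mathcomp Require Import all_classical all_reals all_analysis.
From mathcomp Require Import ring zify.
Set Implicit Arguments. Unset Strict Implicit. Unset Printing Implicit Defensive.
Import Order.TTheory GRing.Theory Num.Theory.
Local Open Scope ring_scope.

(* Writing H_N(x) = \sum_i c_i x^(N-i), the q-derivative lowers x^m to
   [m]_q x^(m-1) and d/dx lowers it to m x^(m-1), so each of the three terms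
   of the equation is again a sum of monomials.  The term of degree N-i-2
   collects 2 [N-i]_q [N-i-1]_q c_i from the q-part and [2]_q^2 (i+2) c_(i+2)
   from x H' - N H; these cancel because the coefficients e_i of e^(-t^2)
   satisfy (i+2) e_(i+2) = -2 e_i (the series solves e' = -2 t e), while
   [N-i]_q [N-i-1]_q is exactly the ratio of q-factorials between c_i and
   c_(i+2). *)

Section QCalculus.
Variables (R : realType) (q : R).
Hypotheses (q_gt0 : 0 < q) (q_neq1 : q != 1).

Lemma qint0 : qint q 0%N = 0.
Proof. by rewrite /qint expr0 subrr mul0r. Qed.

Lemma qint_eq0 n : (qint q n == 0) = (n == 0%N).
Proof.
case: n => [|n]; first by rewrite qint0 eqxx.
rewrite /qint mulf_eq0 invr_eq0 !subr_eq0 (negPf q_neq1) orbF.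
by rewrite pexpr_eq1 ?ltW // (negPf q_neq1).
Qed.

Lemma qfactS n : qfact q n.+1 = qfact q n * qint q n.+1.
Proof. by rewrite /qfact big_ord_recr. Qed.

Lemma qfact_neq0 n : qfact q n != 0.
Proof. by apply/prodf_neq0 => i _; rewrite qint_eq0. Qed.

Lemma qD_monomials M (c : nat -> R) (n : nat -> nat) y : y != 0 ->
  qD q (fun z => \sum_(i < M) c i * z ^+ n i) y
  = \sum_(i < M) c i * qint q (n i) * y ^+ (n i).-1.
Proof.
move=> y_neq0; rewrite /qD -sumrB mulr_suml; apply: eq_bigr => i _.
have q1_neq0 : q - 1 != 0 by rewrite subr_eq0.
rewrite /qint; case: (n i) => [|m] /=; first by rewrite !expr0 !subrr !(mul0r, mulr0).
by rewrite exprMn !exprS; field; rewrite q1_neq0 y_neq0.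
Qed.

(* The outer [qD] only samples [x] and [q * x], both nonzero, where the inner
   [qD] is again a sum of monomials. *)
Lemma qD2_monomials M (c : nat -> R) (n : nat -> nat) x : x != 0 ->
  qD q (qD q (fun z => \sum_(i < M) c i * z ^+ n i)) x
  = \sum_(i < M) c i * qint q (n i) * qint q (n i).-1 * x ^+ (n i).-2.
Proof.
move=> x_neq0; have qx_neq0 : q * x != 0 by rewrite mulf_neq0 // gt_eqF.
have qD_local f g : f x = g x -> f (q * x) = g (q * x) -> qD q f x = qD q g x.
  by rewrite /qD => -> ->.
have := qD_monomials M (fun i => c i * qint q (n i)) (fun i => (n i).-1) x_neq0.
by move=> <-; apply: qD_local; apply: qD_monomials.
Qed.

End QCalculus.

Lemma mulr_derive1_monomials (R : realType) M (c : nat -> R) (n : nat -> nat) x :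
  x * (fun z => \sum_(i < M) c i * z ^+ n i)^`()%classic x
  = \sum_(i < M) c i * (n i)%:R * x ^+ n i.
Proof.
have -> : (fun z => \sum_(i < M) c i * z ^+ n i)
          = horner (\sum_(i < M) c i *: 'X^(n i)).
  apply/funext => z; rewrite horner_sum.
  by apply: eq_bigr => i _; rewrite hornerZ hornerXn.
rewrite -derivE raddf_sum horner_sum mulr_sumr; apply: eq_bigr => i _.
rewrite /= derivZ derivXn hornerZ hornerMn hornerXn -mulr_natl.
by case: (n i) => [|m]; rewrite ?exprS; ring.
Qed.

Lemma sum_shift2_cancel (V : zmodType) n (a b : nat -> V) :
  b 0%N = 0 -> b 1%N = 0 ->
  (forall i, (i.+2 <= n)%N -> a i + b i.+2 = 0) ->
  (forall i, (n <= i.+1)%N -> a i = 0) ->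
  \sum_(i < n.+1) a i + \sum_(i < n.+1) b i = 0.
Proof.
move=> b0 b1 ab_cancel a_top.
pose b' i := if (i <= n)%N then b i else 0.
have -> : \sum_(i < n.+1) b i = \sum_(i < n.+3) b' i.
  rewrite (big_ord_recr n.+2) (big_ord_recr n.+1) /= /b' ltnn ltnNge ltnW // !addr0.
  by apply: eq_bigr => i _; rewrite -ltnS ltn_ord.
rewrite [X in _ + X]big_ord_recl [X in _ + (_ + X)]big_ord_recl /b' /=.
rewrite b0 b1 if_same !add0r -big_split big1 // => i _ /=.
rewrite /bump /= !add1n; case: leqP => [/a_top ->|/ab_cancel //]; exact: addr0.
Qed.

Lemma expm2_coefSS (R : realType) i :
  i.+2%:R * expm2_coef R i.+2 = - 2 * expm2_coef R i.
Proof.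
rewrite /expm2_coef /= negbK; case: ifP => i_odd; first by rewrite !mulr0.
have -> : i.+2%:R = 2 * (i./2).+1%:R :> R.
  by rewrite -{1}(odd_double_half i) i_odd -mul2n -natrM mulnS.
have fact_neq0 : (i./2)`!%:R != 0 :> R by rewrite pnatr_eq0 -lt0n fact_gt0.
rewrite factS natrM exprS; field.
by rewrite fact_neq0 addrC natr1 pnatr_eq0.
Qed.

Section QHermiteCoef.
Variables (R : realType) (q : R).
Hypotheses (q_gt0 : 0 < q) (q_neq1 : q != 1).

Definition qHermite_coef N i : R :=
  qfact q N * expm2_coef R i * qint q 2 ^+ (N - i) / qfact q (N - i).

Lemma horner_qHermite N y :
  (qHermite q N).[y] = \sum_(i < N.+1) qHermite_coef N i * y ^+ (N - i).
Proof.
rewrite /qHermite hornerZ horner_sum mulr_sumr; apply: eq_bigr => i _.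
by rewrite /eq_coef !hornerZ hornerXn /qHermite_coef; ring.
Qed.

Lemma qHermite_coef1 N : qHermite_coef N 1%N = 0.
Proof. by rewrite /qHermite_coef /expm2_coef /= !(mulr0, mul0r). Qed.

Lemma qHermite_coefSS i n :
  2 * qint q n.+2 * qint q n.+1 * qHermite_coef (i + n.+2) i
  + qint q 2 ^+ 2 * i.+2%:R * qHermite_coef (i + n.+2) i.+2 = 0.
Proof.
rewrite /qHermite_coef.
have -> : (i + n.+2 - i = n.+2)%N by lia.
have -> : (i + n.+2 - i.+2 = n)%N by lia.
have -> : expm2_coef R i = - (i.+2%:R * expm2_coef R i.+2) / 2.
  by rewrite expm2_coefSS; field.
rewrite !qfactS !exprS; field.
by rewrite qfact_neq0 // !qint_eq0.
Qed.

End QHermiteCoef.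

Theorem mainTheorem6 (R : realType) (q : R) (hq0 : 0 < q) (hq1 : q != 1)
  (N : nat) (x : R) (hx : x != 0) :
  2 * qD q (qD q (fun y => (qHermite q N).[y])) x
  - qint q 2 ^+ 2 * x * ((fun y => (qHermite q N).[y])^`()%classic x)
  + qint q 2 ^+ 2 * N%:R * (qHermite q N).[x] = 0.
Proof.
set k := qint q 2; set c := qHermite_coef q N.
have -> : (fun y => (qHermite q N).[y]) = (fun y => \sum_(i < N.+1) c i * y ^+ (N - i)).
  by apply/funext => y; apply: horner_qHermite.
rewrite qD2_monomials // -mulrA mulr_derive1_monomials horner_qHermite -/c.
pose a i := 2 * qint q (N - i) * qint q (N - i).-1 * c i * x ^+ (N - i).-2.
pose b i := k ^+ 2 * i%:R * c i * x ^+ (N - i).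
rewrite !mulr_sumr -sumrB -!big_split.
rewrite (eq_bigr (fun i : 'I_N.+1 => a i + b i)) ?big_split => [|i _] /=; last first.
  have i_le_N : (i <= N)%N by rewrite -ltnS.
  by rewrite /a /b natrB //; ring.
apply: sum_shift2_cancel => [||i i2_le_N|i N_le_i1].
- by rewrite /b mulr0 !mul0r.
- by rewrite /b /c qHermite_coef1 mulr0 mul0r.
- have [n N_eq] : exists n, N = (i + n.+2)%N by exists (N - i.+2)%N; lia.
  rewrite /a /b; have -> : (N - i = n.+2)%N by lia.
  have -> : (N - i.+2 = n)%N by lia.
  by rewrite /c N_eq /= -mulrDl qHermite_coefSS // mul0r.
- rewrite /a; have [->|->] : (N - i = 0 \/ N - i = 1)%N by lia.
  + by rewrite qint0 !(mulr0, mul0r).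
  + by rewrite /= qint0 !(mulr0, mul0r).
Qed.
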